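(* Let $k\ge2$ and $n\le0$. Then $$\mathcal{F}_{n,k}(x)=\sum_{\substack{j_1,\dots,j_k\ge0\\ j_1+2j_2+\dots+kj_k=|n|+1-k}}(-1)^{J-j_k}\,\frac{J!}{j_1!\,j_2!\cdots j_k!}\,x^{|n|+1-k(1+j_k)},\qquad J=j_1+\dots+j_k,$$ where an empty sum is $0$.
   Context: For $k\ge2$, the polynomials $\mathcal{F}_{n,k}(x)\in\mathbb{Z}[x]$ ($n\in\mathbb{Z}$) are defined by $\mathcal{F}_{1,k}=1$, $\mathcal{F}_{n,k}=0$ for $n=0,-1,\dots,-(k-2)$, and $\mathcal{F}_{n,k}(x)=\sum_{j=1}^{k}x^{k-j}\mathcal{F}_{n-j,k}(x)$ for all $n\in\mathbb{Z}$. This recurrence is used upwards for $n\ge2$, and downwards for $n\le-(k-1)$ as $\mathcal{F}_{n,k}=\mathcal{F}_{n+k,k}-\sum_{j=1}^{k-1}x^j\mathcal{F}_{n+j,k}$. *)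

From mathcomp Require Import all_boot all_algebra.
Set Implicit Arguments. Unset Strict Implicit. Unset Printing Implicit Defensive.
Import GRing.Theory Num.Theory.
Local Open Scope ring_scope.

(* Nonpositive side (and F_1): aF k j = F_{1-j,k} for j : nat.
     aF k 0 = 1, aF k j = 0 for 1 <= j <= k-1,
     aF k j = aF k (j-k) - sum_{i=1}^{k-1} x^i aF k (j-i)  for j >= k
   (this is exactly the downward recurrence
     F_n = F_{n+k} - sum_{i=1}^{k-1} x^i F_{n+i},  n <= -(k-1)).
   Positive side: cF k i = F_{i-k+2,k} for i : nat.
     cF k i = 0 for i <= k-2, cF k (k-1) = 1,
     cF k i = sum_{j=1}^k x^{k-j} cF k (i-j) for i >= k
   (the upward recurrence for n >= 2). *)

Definition nxt_down (k : nat) (l : seq {poly int}) : {poly int} :=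
  let j := size l in
  if (j < k)%N then (if j == 0%N then 1 else 0)
  else l`_(j - k) - \sum_(1 <= i < k) 'X^i * l`_(j - i).

Definition nxt_up (k : nat) (l : seq {poly int}) : {poly int} :=
  let i := size l in
  if (i < k.-1)%N then 0
  else if i == k.-1 then 1
  else \sum_(1 <= j < k.+1) 'X^(k - j) * l`_(i - j).

Fixpoint tab (nxt : seq {poly int} -> {poly int}) (m : nat) : seq {poly int} :=
  match m with
  | 0 => [:: nxt [::]]
  | m'.+1 => rcons (tab nxt m') (nxt (tab nxt m'))
  end.

Definition aF (k j : nat) : {poly int} := nth 0 (tab (nxt_down k) j) j.
Definition cF (k i : nat) : {poly int} := nth 0 (tab (nxt_up k) i) i.

Definition Fib (k : nat) (n : int) : {poly int} :=
  if n <= 1 then aF k (absz (1 - n)%R) else cF k (absz (n + k%:Z - 2)%R).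

(* 1-based component j_i of a k-tuple j (0 outside 1..k) *)
Definition jc (k M : nat) (j : {ffun 'I_k -> 'I_M}) (i : nat) : nat :=
  match (insub i.-1 : option 'I_k) with Some o => val (j o) | None => 0%N end.

From mathcomp Require Import all_boot all_algebra.
From mathcomp Require Import zify.
Import GRing.Theory Num.Theory.
Local Open Scope ring_scope.
Set Implicit Arguments. Unset Strict Implicit.

(* For [t >= k] the downward recurrence reads
   [F_{1-t} = sum_(i = 1..k) q_i F_{1-t+i}] with [q_i = -x^i] for [i < k] and
   [q_k = 1].  Unfolding it from [F_1 = 1], [F_0 = ... = F_{2-k} = 0] writes
   [F_{1-(s+k)}] as the sum, over all compositions of [s] into parts of size
   at most [k], of the product of the [q]'s of the parts.  Grouping the
   compositions by the multiplicities [j_1, ..., j_k] of their parts gives the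
   multinomial coefficient [J!/(j_1! ... j_k!)] times [prod q_i^(j_i)], which
   is the claimed summand.  Formally: the grouped sum satisfies the same
   recursion as [F] (removing a part decrements one multiplicity, and the
   multinomial coefficient is the sum of those of its decrements), and both
   start at 1. *)

Lemma size_tab nxt m : size (tab nxt m) = m.+1.
Proof. by elim: m => //= m IH; rewrite size_rcons IH. Qed.

Lemma nth_tab nxt m i : (i <= m)%N -> nth 0 (tab nxt m) i = nth 0 (tab nxt i) i.
Proof.
elim: m => [|m IH]; first by rewrite leqn0 => /eqP ->.
rewrite leq_eqVlt => /orP [/eqP -> //|lt_im].
by rewrite /= nth_rcons size_tab lt_im IH.
Qed.

Lemma nth_tab_last nxt m : nth 0 (tab nxt m.+1) m.+1 = nxt (tab nxt m).
Proof. by rewrite /= nth_rcons size_tab ltnn eqxx. Qed.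

Lemma aF0 k : (0 < k)%N -> aF k 0 = 1.
Proof. by rewrite /aF /= /nxt_down /= => ->. Qed.

Lemma aF_small k t : (0 < t < k)%N -> aF k t = 0.
Proof.
case: t => // t /andP [_ lt_tk].
by rewrite /aF nth_tab_last /nxt_down size_tab lt_tk.
Qed.

Lemma aF_rec k t : (0 < k <= t)%N ->
  aF k t = aF k (t - k) - \sum_(1 <= i < k) 'X^i * aF k (t - i).
Proof.
case: t => [|t] /andP [k_gt0 le_kt]; first by lia.
rewrite /aF nth_tab_last /nxt_down size_tab ltnNge le_kt /= nth_tab; last by lia.
congr (_ - _); apply: eq_big_nat => i /andP [i_gt0 lt_ik].
by rewrite nth_tab //; lia.
Qed.

Section Multinomial.
Variables (K M : nat).
Implicit Types (j : {ffun 'I_K -> 'I_M.+1}) (o : 'I_K).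

Definition weight j := (\sum_(o < K) o.+1 * j o)%N.
Definition total j := (\sum_(o < K) j o)%N.
Definition fact_prod j := (\prod_(o < K) (j o)`!)%N.
Definition multinomial j := ((total j)`! %/ fact_prod j)%N.

Definition decr_at j o : {ffun 'I_K -> 'I_M.+1} :=
  [ffun o' => if o' == o then inord (j o').-1 else j o'].
Definition incr_at j o : {ffun 'I_K -> 'I_M.+1} :=
  [ffun o' => if o' == o then inord (j o').+1 else j o'].

Lemma decr_atE j o o' :
  decr_at j o o' = (if o' == o then (j o').-1 else j o') :> nat.
Proof.
rewrite ffunE; case: eqP => // _; rewrite inordK //.
by have := ltn_ord (j o'); lia.
Qed.

Lemma incr_atE j o o' : (j o < M)%N ->
  incr_at j o o' = (if o' == o then (j o').+1 else j o') :> nat.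
Proof. by move=> lt_joM; rewrite ffunE; case: eqP => // ->; rewrite inordK. Qed.

(* Past the bound [M], [inord] wraps around to [0]. *)
Lemma incr_at_max j o : j o = M :> nat -> incr_at j o o = 0 :> nat.
Proof.
by move=> jo_max; rewrite ffunE eqxx /inord /insubd insubF //= jo_max ltnn.
Qed.

Lemma incr_decr_at j o : (0 < j o)%N -> incr_at (decr_at j o) o = j.
Proof.
move=> jo_gt0; have lt_dec_M : (decr_at j o o < M)%N.
  by rewrite decr_atE eqxx; have := ltn_ord (j o); lia.
apply/ffunP => o'; apply: val_inj => /=; rewrite incr_atE // !decr_atE.
by case: (o' =P o) => [->|]; rewrite ?eqxx ?prednK.
Qed.

Lemma decr_incr_at j o : (j o < M)%N -> decr_at (incr_at j o) o = j.
Proof.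
move=> lt_joM; apply/ffunP => o'; apply: val_inj => /=.
by rewrite decr_atE !incr_atE //; case: (o' =P o) => [->|]; rewrite ?eqxx.
Qed.

Lemma big_decr_at {T : Type} {idx : T} (op : Monoid.com_law idx)
    (F : 'I_K -> nat -> T) j o :
  \big[op/idx]_o' F o' (decr_at j o o') =
  op (F o (j o).-1) (\big[op/idx]_(o' | o' != o) F o' (j o')).
Proof.
rewrite (bigD1 o) //= decr_atE eqxx; congr (op _ _).
by apply: eq_bigr => o' /negbTE ne_o'o; rewrite decr_atE ne_o'o.
Qed.

Lemma big_incr_at {T : Type} {idx : T} (op : Monoid.com_law idx)
    (F : 'I_K -> nat -> T) j o : (j o < M)%N ->
  \big[op/idx]_o' F o' (incr_at j o o') =
  op (F o (j o).+1) (\big[op/idx]_(o' | o' != o) F o' (j o')).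
Proof.
move=> lt_joM; rewrite (bigD1 o) //= incr_atE // eqxx; congr (op _ _).
by apply: eq_bigr => o' /negbTE ne_o'o; rewrite incr_atE // ne_o'o.
Qed.

Lemma leq_total j o : (j o <= total j)%N.
Proof. by rewrite /total (bigD1 o) //= leq_addr. Qed.

Lemma leq_weight j o : (o.+1 * j o <= weight j)%N.
Proof. by rewrite /weight (bigD1 o) //= leq_addr. Qed.

Lemma weight_le_total j : (weight j <= K * total j)%N.
Proof.
rewrite /weight /total big_distrr /=; apply: leq_sum => o _.
by rewrite leq_mul2r ltn_ord orbT.
Qed.

Lemma total_decr_at j o : (0 < j o)%N -> total (decr_at j o) = (total j).-1.
Proof.
move=> jo_gt0; rewrite /total (big_decr_at _ (fun _ n => n)).
by rewrite [in RHS](bigD1 o) //=; lia.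
Qed.

Lemma weight_incr_at j o : (j o < M)%N ->
  weight (incr_at j o) = (weight j + o.+1)%N.
Proof.
move=> lt_joM; rewrite /weight (big_incr_at _ (fun o' n => o'.+1 * n)%N) //.
by rewrite [in RHS](bigD1 o) //= mulnS; lia.
Qed.

Lemma fact_prod_decr_at j o : (0 < j o)%N ->
  fact_prod j = (j o * fact_prod (decr_at j o))%N.
Proof.
move=> jo_gt0; rewrite /fact_prod (big_decr_at _ (fun _ n => n`!)).
by rewrite (bigD1 o) //= mulnA -{1 2}(prednK jo_gt0) factS.
Qed.

Lemma fact_total_rec j : (0 < total j)%N ->
  (total j)`! = (\sum_(o | (0 < j o)%N) j o * (total j).-1`!)%N.
Proof.
move=> tot_gt0; rewrite -{1}(prednK tot_gt0) factS prednK // -big_distrl /=.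
congr (_ * _)%N; rewrite /total [LHS](bigID (fun o => (0 < j o)%N)) /=.
by rewrite [X in (_ + X)%N]big1 ?addn0 // => o; rewrite lt0n negbK => /eqP.
Qed.

Lemma fact_prod_dvd j : (fact_prod j %| (total j)`!)%N.
Proof.
move tot_j: (total j) => t; elim: t j tot_j => [|t IH] j tot_j.
  rewrite /fact_prod big1 // => o _.
  by have := leq_total j o; rewrite tot_j leqn0 => /eqP ->.
rewrite -tot_j fact_total_rec ?tot_j //; apply: dvdn_sum => o jo_gt0.
rewrite (fact_prod_decr_at jo_gt0) dvdn_pmul2l //.
by apply: IH; rewrite total_decr_at // tot_j.
Qed.

Lemma multinomial_rec j : (0 < total j)%N ->
  multinomial j = (\sum_(o | (0 < j o)%N) multinomial (decr_at j o))%N.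
Proof.
move=> tot_gt0; have fact_prod_gt0 : (0 < fact_prod j)%N.
  by apply: prodn_gt0 => o; apply: fact_gt0.
rewrite /multinomial fact_total_rec //.
rewrite (eq_bigr (fun o => fact_prod j *
    ((total (decr_at j o))`! %/ fact_prod (decr_at j o)))%N).
  by rewrite -big_distrr /= mulKn.
move=> o jo_gt0; rewrite (fact_prod_decr_at jo_gt0) -mulnA (mulnC (fact_prod _)).
by rewrite divnK ?fact_prod_dvd // total_decr_at.
Qed.

Lemma sum_decr_at (V : nmodType) (F : {ffun 'I_K -> 'I_M.+1} -> V) o s :
  (o.+1 <= s <= M)%N ->
  \sum_(j | (weight j == s) && (0 < j o)%N) F (decr_at j o) =
  \sum_(j | weight j == (s - o.+1)%N) F j.
Proof.
move=> /andP [le_os le_sM].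
rewrite (reindex_onto (incr_at^~ o) (decr_at^~ o)); last first.
  by move=> j /andP [_ jo_gt0]; rewrite incr_decr_at.
apply: eq_big => [j|j /andP [_ /eqP -> //]].
have := ltn_ord (j o); rewrite ltnS leq_eqVlt => /orP [/eqP jo_max|lt_joM].
  rewrite incr_at_max // ltnn andbF /=; apply/esym/negbTE/eqP => wt_j.
  by have := leq_weight j o; rewrite jo_max; nia.
rewrite weight_incr_at // decr_incr_at // eqxx andbT incr_atE // eqxx andbT.
by apply/eqP/eqP; lia.
Qed.

Variables (R : comPzSemiRingType) (q : 'I_K -> R).

Definition multinomial_sum s : R :=
  \sum_(j | weight j == s) (multinomial j)%:R * \prod_(o < K) q o ^+ j o.

Lemma multinomial_sum0 : multinomial_sum 0 = 1.
Proof.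
rewrite /multinomial_sum (big_pred1 [ffun => ord0]) => [|j].
  by rewrite /multinomial /fact_prod /total !big1 ?mul1r //= => o _;
    rewrite ffunE.
apply/idP/idP => [/eqP wt_j|/eqP ->].
  apply/eqP/ffunP => o; apply: val_inj; rewrite ffunE /=.
  by have := leq_weight j o; rewrite wt_j; lia.
by apply/eqP; rewrite /weight big1 // => o _; rewrite ffunE muln0.
Qed.

Lemma prod_decr_at j o : (0 < j o)%N ->
  \prod_o' q o' ^+ j o' = q o * \prod_o' q o' ^+ decr_at j o o'.
Proof.
move=> jo_gt0; rewrite (big_decr_at _ (fun o' n => q o' ^+ n)).
by rewrite (bigD1 o) //= mulrA -exprS prednK.
Qed.

Lemma multinomial_sum_rec s : (0 < s <= M)%N ->
  multinomial_sum s =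
  \sum_(o < K | (o.+1 <= s)%N) q o * multinomial_sum (s - o.+1)%N.
Proof.
move=> /andP [s_gt0 le_sM]; rewrite /multinomial_sum.
under eq_bigr => j /eqP wt_j.
  have tot_gt0 : (0 < total j)%N by have := weight_le_total j; lia.
  rewrite multinomial_rec // natr_sum big_distrl /=.
  under eq_bigr => o jo_gt0 do rewrite (prod_decr_at jo_gt0) mulrCA.
  over.
rewrite (exchange_big_dep xpredT) //= [RHS]big_mkcond /=; apply: eq_bigr => o _.
case: ifP => [le_os|/negbT gt_os]; last first.
  rewrite big_pred0 // => j; apply/negbTE/andP => -[/eqP wt_j jo_gt0].
  by have := leq_weight j o; nia.
rewrite -big_distrr /= (sum_decr_at
  (fun j => (multinomial j)%:R * \prod_(o' < K) q o' ^+ j o')) //.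
by rewrite le_os.
Qed.

End Multinomial.

Definition down_coef k (o : 'I_k) : {poly int} :=
  if (o.+1 < k)%N then - 'X^(o.+1) else 1.

Lemma aF_multinomial_sum k M s : (2 <= k)%N -> (s <= M)%N ->
  aF k (s + k) = multinomial_sum M (down_coef (k := k)) s.
Proof.
case: k => // k lt1k; elim/ltn_ind: s => s IH le_sM.
have [->|s_gt0] := posnP s.
  rewrite multinomial_sum0 add0n aF_rec ?subnn ?aF0 //; last by lia.
  rewrite big_nat_cond big1 ?subr0 // => i /andP [/andP [i_gt0 lt_ik] _].
  by rewrite aF_small ?mulr0 //; lia.
rewrite multinomial_sum_rec ?s_gt0 // aF_rec ?addnK; last by lia.
rewrite [RHS]big_mkcond big_ord_recr /= big_add1 /= big_mkord addrC.
congr (_ + _).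
  rewrite /down_coef /= ltnn mul1r; case: ifP => [le_ks|/negbT gt_ks].
    by rewrite -[in LHS](subnK le_ks) IH //; lia.
  by rewrite aF_small //; lia.
rewrite -sumrN; apply: eq_bigr => o _.
rewrite /down_coef /= ltnS ltn_ord; case: ifP => [le_os|/negbT gt_os].
  by rewrite mulNr (_ : s + k.+1 - o.+1 = s - o.+1 + k.+1)%N ?IH //; lia.
by rewrite aF_small ?mulr0 ?oppr0 //; have := ltn_ord o; lia.
Qed.

Lemma jcE k M (j : {ffun 'I_k -> 'I_M}) (o : 'I_k) : jc j o.+1 = j o.
Proof.
rewrite /jc /=; case: insubP => [u _ val_u|]; last by rewrite ltn_ord.
by congr (nat_of_ord (j _)); apply: val_inj.
Qed.

Lemma big_jc (T : Type) (idx : T) (op : Monoid.law idx) k M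
    (F : nat -> nat -> T) (j : {ffun 'I_k -> 'I_M}) :
  \big[op/idx]_(1 <= i < k.+1) F i (jc j i) = \big[op/idx]_(o < k) F o.+1 (j o).
Proof. by rewrite big_add1 /= big_mkord; apply: eq_bigr => o _; rewrite jcE. Qed.

Lemma prod_down_coef k M (j : {ffun 'I_k.+1 -> 'I_M.+1}) :
  \prod_o down_coef o ^+ j o =
  (-1) ^+ (total j - j ord_max)%N * 'X^(weight j - k.+1 * j ord_max).
Proof.
rewrite big_ord_recr /= {2}/down_coef ltnn expr1n mulr1.
under eq_bigr => o _ do
  rewrite /down_coef /= ltnS ltn_ord exprNn -exprM.
rewrite big_split /= !prodrXr /weight /total !big_ord_recr /= !addnK.
by congr (_ * 'X^_); apply: eq_bigr.
Qed.

Lemma Fib_nonpos k n : n <= 0 -> Fib k n = aF k (absz n).+1.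
Proof.
rewrite /Fib; case: n => p; first by rewrite lez_nat leqn0 => /eqP ->.
by move=> _ /=; congr aF; rewrite NegzE opprK; lia.
Qed.

Unset Implicit Arguments.
Theorem mainTheorem7 (k : nat) (n : int) :
  (2 <= k)%N -> n <= 0 ->
  Fib k n =
  \sum_(j : {ffun 'I_k -> 'I_((absz n).+2)} |
          (\sum_(1 <= i < k.+1) i * jc j i + k == (absz n) + 1)%N)
     (-1) ^+ (\sum_(1 <= i < k.+1) jc j i - jc j k)%N
     * ((\sum_(1 <= i < k.+1) jc j i)`! %/ \prod_(1 <= i < k.+1) (jc j i)`!)%N%:R
     * 'X^((absz n) + 1 - k * (1 + jc j k)).
Proof.
move=> le2k /Fib_nonpos ->; set m := absz n.
have [lt_mk|le_km] := ltnP m.+1 k.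
  rewrite aF_small ?lt_mk // big_pred0 // => j; apply/negP => /eqP; lia.
rewrite -[in LHS](subnK le_km) (aF_multinomial_sum (M := m.+1)) ?leq_subr //.
case: k le2k le_km => // k _ le_km; rewrite /multinomial_sum.
apply: eq_big => [j|j /eqP wt_j].
  by rewrite big_jc -/(weight j); apply/eqP/eqP; lia.
rewrite (big_jc _ (fun _ n => n)) (big_jc _ (fun _ n => n`!)) -/(total j).
rewrite -/(fact_prod j) -/(multinomial j) prod_down_coef (jcE j ord_max).
by rewrite mulrCA mulrA wt_j mulnDr muln1 subnDA addn1.
Qed.
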